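(* Let $A$ be a one-dimensional integral domain with Noetherian prime spectrum. Then every sublocalization over $A$ is flat over $A$.
   Context: For an integral domain $A$ with field of fractions $K$, an overring of $A$ is a subring of $K$ containing $A$; it is a localization of $A$ if it equals $S^{-1}A$ for a multiplicatively closed set $S$ of nonzero elements of $A$, and a sublocalization over $A$ if it is an intersection of localizations of $A$. *)

From HB Require Import structures.
From mathcomp Require Import all_boot all_algebra.
Set Implicit Arguments. Unset Strict Implicit. Unset Printing Implicit Defensive.
Import GRing.Theory.
Local Open Scope ring_scope.

Section CommAlg.
Variable A : comNzRingType.

Definition is_ideal (I : A -> Prop) : Prop :=
  [/\ I 0, (forall x y, I x -> I y -> I (x + y)) & (forall a x, I x -> I (a * x))].

Definition is_prime_ideal (P : A -> Prop) : Prop :=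
  [/\ is_ideal P, ~ P 1 & (forall x y, P (x * y) -> P x \/ P y)].

Definition strict_incl (P Q : A -> Prop) : Prop :=
  (forall x, P x -> Q x) /\ exists x, Q x /\ ~ P x.

Definition krull_dim_one : Prop :=
  (exists P0 P1, [/\ is_prime_ideal P0, is_prime_ideal P1 & strict_incl P0 P1]) /\
  ~ (exists P0 P1 P2, [/\ is_prime_ideal P0, is_prime_ideal P1, is_prime_ideal P2,
                         strict_incl P0 P1 & strict_incl P1 P2]).

Definition zariski_closed (C : (A -> Prop) -> Prop) : Prop :=
  exists E : A -> Prop,
    forall P, C P <-> (is_prime_ideal P /\ forall x, E x -> P x).

Definition noetherian_spectrum : Prop :=
  forall C : nat -> (A -> Prop) -> Prop,
    (forall n, zariski_closed (C n)) ->
    (forall n P, C n.+1 P -> C n P) ->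
    exists N, forall n, (N <= n)%N -> forall P, C n P <-> C N P.

Definition mult_closed_nonzero (S : A -> Prop) : Prop :=
  [/\ S 1, (forall x y, S x -> S y -> S (x * y)) & ~ S 0].

End CommAlg.

Section Overrings.
Variables (A : idomainType) (K : fieldType) (f : {rmorphism A -> K}).

Definition fraction_field_of : Prop :=
  injective f /\ forall z : K, exists a b : A, b != 0 /\ z = f a / f b.

Definition overring (R : K -> Prop) : Prop :=
  [/\ forall a, R (f a), (forall x y, R x -> R y -> R (x - y))
    & (forall x y, R x -> R y -> R (x * y))].

Definition localization (S : A -> Prop) (z : K) : Prop :=
  exists a s, S s /\ z = f a / f s.

Definition sublocalization (R : K -> Prop) : Prop :=
  overring R /\
  exists F : (A -> Prop) -> Prop,
    (forall S, F S -> mult_closed_nonzero S) /\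
    forall z, R z <-> (forall S, F S -> localization S z).

(* Flatness of R as an A-module (A acting by multiplication through f),
   via the equational criterion: every linear relation among elements of R
   with coefficients in A is trivial. *)
Definition flat_over (R : K -> Prop) : Prop :=
  forall (n : nat) (a : 'I_n -> A) (r : 'I_n -> K),
    (forall i, R (r i)) ->
    \sum_(i < n) f (a i) * r i = 0 ->
    exists (m : nat) (b : 'I_n -> 'I_m -> A) (s : 'I_m -> K),
      [/\ forall j, R (s j),
          forall i, r i = \sum_(j < m) f (b i j) * s j
        & forall j, \sum_(i < n) a i * b i j = 0].

End Overrings.

From HB Require Import structures.
Set Warnings "-notation-overridden -ambiguous-paths".
From mathcomp Require Import all_boot all_algebra.
From mathcomp Require Import boolp classical_sets ring.
Set Implicit Arguments. Unset Strict Implicit. Unset Printing Implicit Defensive.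
Import GRing.Theory.
Local Open Scope ring_scope.
Local Open Scope classical_set_scope.

(* For [z] in [R] let [I_z = {d | d z \in A}] be its ideal of denominators. It
   suffices that [I_z R = R] for every [z] in [R]: a common denominator of
   [r_1, ..., r_n] then splits any [A]-linear relation among the [r_i].
   If [I_z R] were proper, its contraction would lie in a prime [P] of [A].
   A localization [S^-1 A] of the intersection with [S] disjoint from [P] is
   impossible, since [S] meets [I_z]. Otherwise pick [b <> 0] in [I_z]. As [A]
   has dimension one and a Noetherian spectrum, Noetherian induction on the
   closed subsets of [V(b)] yields [y] outside [P] with [y^m / b] in [A_Q] for
   every [Q] in [V(b)] other than [P]; as every [S] meets [P], [y^m / b] then
   lies in every [S^-1 A], hence in [R], and [y^m = b (y^m / b)] lies in
   [I_z R \cap A], inside [P]. *)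

Section PrimeAvoidance.
Variable A : comNzRingType.
Implicit Types (I M N P Q U : A -> Prop) (x y : A).

Definition avoids I U := forall x, I x -> ~ U x.

Lemma prime_ideal_neq1 P : is_prime_ideal P -> ~ P 1.
Proof. by case. Qed.

Lemma prime_idealM_not P x y : is_prime_ideal P -> ~ P x -> ~ P y -> ~ P (x * y).
Proof. by move=> [_ _ Pmul] nPx nPy /Pmul[]. Qed.

Lemma prime_idealX_not P y m : is_prime_ideal P -> ~ P y -> ~ P (y ^+ m).
Proof.
move=> Pprime nPy; elim: m => [|m IHm]; first by rewrite expr0; exact: prime_ideal_neq1.
by rewrite exprS; exact: prime_idealM_not.
Qed.

Definition ideal_adjoin M w z := exists m a, M m /\ z = m + a * w.

Lemma ideal_adjoin_ideal M w : is_ideal M -> is_ideal (ideal_adjoin M w).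
Proof.
move=> [M0 MD MM]; split.
- by exists 0, 0; rewrite mul0r addr0.
- move=> _ _ [m1 [a1 [Mm1 ->]]] [m2 [a2 [Mm2 ->]]].
  by exists (m1 + m2), (a1 + a2); split; [exact: MD | rewrite mulrDl addrACA].
- move=> c _ [m [a [Mm ->]]].
  by exists (c * m), (c * a); split; [exact: MM | rewrite mulrDr mulrA].
Qed.

Lemma ideal_adjoin_sub M w : M `<=` ideal_adjoin M w.
Proof. by move=> z Mz; exists z, 0; rewrite mul0r addr0. Qed.

Lemma ideal_adjoin_gen M w : is_ideal M -> ideal_adjoin M w w.
Proof. by case=> M0 _ _; exists 0, 1; rewrite mul1r add0r. Qed.

Lemma chain_bigcup_ideal_avoiding I U (F : set (set A)) :
  is_ideal I -> avoids I U ->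
  (forall X, F X -> is_ideal (X `|` I) /\ avoids (X `|` I) U) -> total_on F subset ->
  let Y := \bigcup_(X in F) X in is_ideal (Y `|` I) /\ avoids (Y `|` I) U.
Proof.
move=> [I0 ID IM] IU Fgood Ftot Y.
have common x y : (Y `|` I) x -> (Y `|` I) y -> (I x /\ I y) \/
    exists X, [/\ F X, X `<=` Y, (X `|` I) x & (X `|` I) y].
  have sub X : F X -> X `<=` Y by move=> FX z Xz; exists X.
  move=> [[X1 FX1 X1x]|Ix] [[X2 FX2 X2y]|Iy]; [right..|by left].
  - have [X12|X21] := Ftot _ _ FX1 FX2.
    + by exists X2; split; [| exact: sub | left; exact: X12 | left].
    + by exists X1; split; [| exact: sub | left | left; exact: X21].
  - by exists X1; split; [| exact: sub | left | right].
  - by exists X2; split; [| exact: sub | right | left].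
split; [split|].
- by right.
- move=> x y /common /[apply] -[[Ix Iy]|[X [/Fgood[[_ XD _] _] XY Xx Xy]]].
    by right; exact: ID.
  by case: (XD _ _ Xx Xy) => [/XY|]; [left|right].
- move=> a x Hx; have [[Ix _]|[X [/Fgood[[_ _ XM] _] XY Xx _]]] := common _ _ Hx Hx.
    by right; exact: IM.
  by case: (XM a _ Xx) => [/XY|]; [left|right].
- move=> x Hx; have [[Ix _]|[X [/Fgood[_ XU] _ Xx _]]] := common _ _ Hx Hx.
    exact: IU.
  exact: XU.
Qed.

Lemma maximal_ideal_avoiding I U : is_ideal I -> avoids I U ->
  exists M, [/\ is_ideal M, I `<=` M, avoids M U &
    forall N, is_ideal N -> M `<=` N -> avoids N U -> N `<=` M].
Proof.
move=> Iideal IU.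
(* Zorn's lemma needs the empty chain too, hence candidates [X] enter only through [X `|` I]. *)
have [X [[XIideal XIU] Xmax]] : exists X, (is_ideal (X `|` I) /\ avoids (X `|` I) U) /\
    forall Y, X `<` Y -> ~ (is_ideal (Y `|` I) /\ avoids (Y `|` I) U).
  by apply: Zorn_bigcup => F; exact: chain_bigcup_ideal_avoiding.
exists (X `|` I); split=> // N Nideal XIN NU x Nx; apply: contrapT => nXIx.
have NI : N `|` I = N by apply/seteqP; split=> [z [//|Iz]|z Nz]; [apply: XIN; right | left].
apply: (Xmax N); last by rewrite NI.
by split=> [z Xz|NX]; [apply: XIN; left | apply: nXIx; left; exact: NX].
Qed.

Lemma maximal_ideal_avoiding_prime M U : U 1 ->
  (forall x y, U x -> U y -> U (x * y)) ->
  is_ideal M -> avoids M U ->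
  (forall N, is_ideal N -> M `<=` N -> avoids N U -> N `<=` M) ->
  is_prime_ideal M.
Proof.
move=> U1 UM Mideal MU Mmax; split=> //; first by move/MU.
have [_ MD MM] := Mideal.
have meetU w : ~ M w -> exists m a, M m /\ U (m + a * w).
  move=> nMw; apply: contrapT => nmeet; apply/nMw/(Mmax (ideal_adjoin M w)).
  - exact: ideal_adjoin_ideal.
  - exact: ideal_adjoin_sub.
  - by move=> _ [m [a [Mm ->]]] Uz; apply: nmeet; exists m, a.
  - exact: ideal_adjoin_gen.
move=> x y Mxy; apply: contrapT => /not_orP[nMx nMy].
have [m1 [a1 [Mm1 U1']]] := meetU x nMx.
have [m2 [a2 [Mm2 U2']]] := meetU y nMy.
apply: (MU _ _ (UM _ _ U1' U2')).
have -> : (m1 + a1 * x) * (m2 + a2 * y) =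
    (m2 + a2 * y) * m1 + ((a1 * x) * m2 + (a1 * a2) * (x * y)) by ring.
by apply: (MD); [|apply: (MD)]; exact: MM.
Qed.

Lemma prime_avoiding I U : is_ideal I -> U 1 ->
  (forall x y, U x -> U y -> U (x * y)) -> avoids I U ->
  exists Q, [/\ is_prime_ideal Q, I `<=` Q & avoids Q U].
Proof.
move=> Iideal U1 UM IU.
have [M [Mideal IM MU Mmax]] := maximal_ideal_avoiding Iideal IU.
by exists M; split=> //; exact: maximal_ideal_avoiding_prime Mmax.
Qed.

End PrimeAvoidance.

Section Spectrum.
Variable A : comNzRingType.
Implicit Types (P Q : A -> Prop) (W : set (A -> Prop)) (x y : A).

Definition colon (p a : A) x := exists c, x * a = p * c.

Lemma colon_ideal p a : is_ideal (colon p a).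
Proof.
split.
- by exists 0; rewrite mul0r mulr0.
- by move=> x y [c1 E1] [c2 E2]; exists (c1 + c2); rewrite mulrDl E1 E2 mulrDr.
- by move=> b x [c E]; exists (b * c); rewrite -mulrA E mulrCA.
Qed.

Lemma colon_refl p a : colon p a p.
Proof. by exists a; rewrite mulrC. Qed.

Definition vanishing_ideal W x := forall Q, W Q -> Q x.

Lemma zariski_closed_prime W Q : zariski_closed W -> W Q -> is_prime_ideal Q.
Proof. by move=> [E WE] /WE[]. Qed.

Lemma zariski_closedI1 W z : zariski_closed W -> zariski_closed (W `&` [set Q | Q z]).
Proof.
move=> [E WE]; exists (E `|` [set z]) => Q; split.
- move=> [/WE[Qprime QE] Qz]; split=> // w [/QE //|->]; exact: Qz.
- move=> [Qprime QEz]; split; last by apply: QEz; right.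
  by apply/WE; split=> // w Ew; apply: QEz; left.
Qed.

Lemma vanishing_ideal_split W : zariski_closed W -> W !=set0 ->
  ~ is_prime_ideal (vanishing_ideal W) ->
  exists x y, [/\ ~ vanishing_ideal W x, ~ vanishing_ideal W y &
                  vanishing_ideal W (x * y)].
Proof.
move=> Wclosed [Q0 WQ0] nprime; apply: contrapT => nsplit; apply: nprime; split.
- split.
  + by move=> Q /(zariski_closed_prime Wclosed) [[]].
  + move=> x y Wx Wy Q WQ.
    by have [[_ QD _] _ _] := zariski_closed_prime Wclosed WQ; apply: QD; [exact: Wx|exact: Wy].
  + move=> a x Wx Q WQ.
    by have [[_ _ QM] _ _] := zariski_closed_prime Wclosed WQ; apply: QM; exact: Wx.
- by move=> W1; apply: (prime_ideal_neq1 (zariski_closed_prime Wclosed WQ0)); exact: W1.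
- move=> x y Wxy; apply: contrapT => /not_orP[nx ny]; apply: nsplit.
  by exists x, y.
Qed.

Lemma noetherian_closed_ind (Phi : set (A -> Prop) -> Prop) :
  noetherian_spectrum A ->
  (forall W, zariski_closed W ->
     (forall W', zariski_closed W' -> W' `<` W -> Phi W') -> Phi W) ->
  forall W, zariski_closed W -> Phi W.
Proof.
move=> Anoeth IH W0 W0closed; apply: contrapT => nPhiW0.
pose bad := {W | zariski_closed W /\ ~ Phi W}.
have /choice[smaller smallerP] : forall B : bad, exists B' : bad, sval B' `<` sval B.
  move=> [W [Wclosed nPhiW]]; apply: contrapT => nsmaller; apply/nPhiW/IH => // W' W'closed W'W.
  by apply: contrapT => nPhiW'; apply: nsmaller; exists (exist _ W' (conj W'closed nPhiW')).
pose B0 : bad := exist _ W0 (conj W0closed nPhiW0).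
pose C n := sval (iter n smaller B0).
have [N CN] : exists N, forall n, (N <= n)%N -> forall Q, C n Q <-> C N Q.
  apply: Anoeth => n; first by rewrite /C; case: (iter n _ _) => W [].
  by have [] := smallerP (iter n smaller B0).
have [_ []] := smallerP (iter N smaller B0).
by move=> Q /(CN N.+1 (leqnSn N)).
Qed.

(* Some [y ^+ m] with [y] outside [P] has [y ^+ m / p] in [A_Q] for every [Q] in [W] other than [P]. *)
Definition pow_div_local (p : A) P W := exists y m, ~ P y /\
  forall Q, W Q -> Q <> P -> exists t, ~ Q t /\ colon p (y ^+ m) t.

Lemma colonMr p a b t : colon p a t -> colon p (a * b) t.
Proof. by move=> [c E]; exists (c * b); rewrite mulrA E mulrA. Qed.

Lemma pow_div_local0 p P : is_prime_ideal P -> pow_div_local p P set0.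
Proof. by move=> Pprime; exists 1, 0%N; split=> //; exact: prime_ideal_neq1. Qed.

Lemma pow_div_local_sub p P W W' : W `<=` W' -> pow_div_local p P W' -> pow_div_local p P W.
Proof. by move=> WW' [y [m [nPy Hy]]]; exists y, m; split=> // Q /WW'; exact: Hy. Qed.

Lemma pow_div_localU p P W1 W2 : is_prime_ideal P ->
  pow_div_local p P W1 -> pow_div_local p P W2 -> pow_div_local p P (W1 `|` W2).
Proof.
move=> Pprime [y1 [m1 [nPy1 H1]]] [y2 [m2 [nPy2 H2]]].
exists (y1 * y2), (m1 + m2)%N; split; first exact: prime_idealM_not.
move=> Q [W1Q|W2Q] QP.
- have [t [nQt /colonMr tcolon]] := H1 Q W1Q QP; exists t; split=> //.
  by rewrite exprMn exprD -mulrA; apply: tcolon.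
- have [t [nQt /colonMr tcolon]] := H2 Q W2Q QP; exists t; split=> //.
  by rewrite exprMn mulrC addnC exprD -mulrA; apply: tcolon.
Qed.

End Spectrum.

Section DimensionOne.
Variable A : idomainType.
Implicit Types (P Q : A -> Prop) (W : set (A -> Prop)) (x y : A).

Lemma zero_prime_ideal : is_prime_ideal (fun x : A => x = 0).
Proof.
split; [split | |].
- by [].
- by move=> x y -> ->; rewrite addr0.
- by move=> a x ->; rewrite mulr0.
- by move/eqP; rewrite oner_eq0.
- by move=> x y /eqP; rewrite mulf_eq0 => /orP[] /eqP; [left | right].
Qed.

Hypothesis Adim : krull_dim_one A.

Lemma dim_one_prime_sub_eq Q1 Q2 c : is_prime_ideal Q1 -> is_prime_ideal Q2 ->
  Q1 c -> c != 0 -> Q1 `<=` Q2 -> Q1 = Q2.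
Proof.
move=> Q1prime Q2prime Q1c c0 Q12; apply/seteqP; split=> // x Q2x.
apply: contrapT => nQ1x; apply: Adim.2; exists (fun x => x = 0), Q1, Q2; split=> //.
- exact: zero_prime_ideal.
- split; last by exists c; split=> //; apply/eqP.
  by move=> _ ->; case: Q1prime => [[]].
- by split=> //; exists x.
Qed.

(* A prime containing [p] and avoiding [{t y^m | t \notin Q}] would lie strictly
   between [0] and [Q]. *)
Lemma dim_one_radical Q p y : is_prime_ideal Q -> Q p -> p != 0 -> Q y ->
  exists t m, ~ Q t /\ colon p (y ^+ m) t.
Proof.
move=> Qprime Qp p0 Qy; apply: contrapT => nrad.
pose U x := exists t m, ~ Q t /\ x = t * y ^+ m.
have [Q' [Q'prime pQ' Q'U]] :
    exists Q', [/\ is_prime_ideal Q', colon p 1 `<=` Q' & avoids Q' U].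
  apply: prime_avoiding; first exact: colon_ideal.
  - by exists 1, 0%N; rewrite expr0 mulr1; split=> //; exact: prime_ideal_neq1.
  - move=> _ _ [t1 [m1 [nQt1 ->]]] [t2 [m2 [nQt2 ->]]].
    exists (t1 * t2), (m1 + m2)%N; split; first exact: prime_idealM_not.
    by rewrite exprD; ring.
  - move=> x [c xp] [t [m [nQt xE]]]; apply: nrad; exists t, m; split=> //.
    by exists c; rewrite -xE -xp mulr1.
have Q'Q : Q' `<=` Q.
  move=> x Q'x; apply: contrapT => nQx; apply: (Q'U _ Q'x).
  by exists x, 0%N; rewrite expr0 mulr1.
have Q'eqQ := dim_one_prime_sub_eq Q'prime Qprime (pQ' _ (colon_refl p 1)) p0 Q'Q.
apply: (Q'U y); first by rewrite Q'eqQ.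
by exists 1, 1%N; rewrite expr1 mul1r; split=> //; exact: prime_ideal_neq1.
Qed.

(* An irreducible closed subset of [V(p)], [p <> 0], is a single point. *)
Lemma pow_div_local_irreducible p P W : p != 0 -> is_prime_ideal P ->
  (forall Q, W Q -> is_prime_ideal Q /\ Q p) ->
  is_prime_ideal (vanishing_ideal W) -> pow_div_local p P W.
Proof.
move=> p0 Pprime WVp Iprime; set I := vanishing_ideal W in Iprime *.
have Ip : I p by move=> Q /WVp[].
have WI Q : W Q -> Q = I.
  move=> WQ; apply/esym/(dim_one_prime_sub_eq Iprime (WVp Q WQ).1 Ip p0).
  by move=> x; apply.
have [<-|IP] := pselect (I = P).
  by exists 1, 0%N; split; [exact: prime_ideal_neq1 | move=> Q /WI].
have [y Iy nPy] : exists2 y, I y & ~ P y.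
  apply: contrapT => nIP; apply/IP/(dim_one_prime_sub_eq Iprime Pprime Ip p0).
  by move=> x Ix; apply: contrapT => nPx; apply: nIP; exists x.
have [t [m [nIt tcolon]]] := dim_one_radical Iprime Ip p0 Iy.
by exists y, m; split=> // Q /WI-> _; exists t.
Qed.

Lemma pow_div_local_V p P : noetherian_spectrum A -> p != 0 -> is_prime_ideal P ->
  pow_div_local p P [set Q | is_prime_ideal Q /\ Q p].
Proof.
move=> Anoeth p0 Pprime.
suff Vp_ind W : zariski_closed W -> W `<=` [set Q | is_prime_ideal Q /\ Q p] ->
    pow_div_local p P W.
  apply: Vp_ind => //; exists [set p] => Q.
  by split=> [[Qprime Qp]|[Qprime Qp]]; split=> //; [move=> _ -> | exact: Qp].
move: W; apply: noetherian_closed_ind => // W Wclosed IH WVp.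
have [Wne|/nonemptyPn->] := pselect (W !=set0); last exact: pow_div_local0.
have [Iprime|nIprime] := pselect (is_prime_ideal (vanishing_ideal W)).
  exact: pow_div_local_irreducible.
have [x [y [nWx nWy Wxy]]] := vanishing_ideal_split Wclosed Wne nIprime.
have part z : ~ vanishing_ideal W z -> pow_div_local p P (W `&` [set Q | Q z]).
  move=> nWz; apply: IH; first exact: zariski_closedI1.
  - by split=> [Q []//|WWz]; apply: nWz => Q /WWz[].
  - by move=> Q [/WVp].
apply: pow_div_local_sub (pow_div_localU Pprime (part x nWx) (part y nWy)).
move=> Q WQ; have [_ _ Qmul] := zariski_closed_prime Wclosed WQ.
by case: (Qmul _ _ (Wxy Q WQ)) => ?; [left | right].
Qed.

End DimensionOne.

Section Overring.
Variables (A : idomainType) (K : fieldType) (f : {rmorphism A -> K}).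
Hypothesis f_inj : injective f.
Variable R : K -> Prop.
Hypothesis Rover : overring f R.
Implicit Types (D : A -> Prop) (z : K).

Lemma overring_img a : R (f a). Proof. by case: Rover. Qed.

Lemma overringM z1 z2 : R z1 -> R z2 -> R (z1 * z2).
Proof. by case: Rover => _ _; apply. Qed.

Definition in_extension D z := exists s : seq (A * K),
  (forall q, q \in s -> D q.1 /\ R q.2) /\ \sum_(q <- s) f q.1 * q.2 = z.

Lemma in_extension_gen D d : D d -> in_extension D (f d).
Proof.
move=> Dd; exists [:: (d, 1)]; split; last by rewrite big_seq1 mulr1.
by move=> q; rewrite inE => /eqP-> /=; split; rewrite // -(rmorph1 f); exact: overring_img.
Qed.

Lemma in_extensionMl D r z : R r -> in_extension D z -> in_extension D (r * z).
Proof.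
move=> Rr [s [sDR <-]]; exists [seq (q.1, r * q.2) | q <- s]; split.
  by move=> _ /mapP[q qs ->] /=; have [Dq Rq] := sDR q qs; split; last exact: overringM.
by rewrite big_map mulr_sumr; apply: eq_bigr => q _ /=; rewrite mulrCA.
Qed.

Lemma in_extensionM D1 D2 D z1 z2 : in_extension D1 z1 -> in_extension D2 z2 ->
  (forall x y, D1 x -> D2 y -> D (x * y)) -> in_extension D (z1 * z2).
Proof.
move=> [s1 [s1DR <-]] [s2 [s2DR <-]] D12.
exists [seq (q1.1 * q2.1, q1.2 * q2.2) | q1 <- s1, q2 <- s2]; split.
  move=> _ /allpairsP[[q1 q2] [/= q1s q2s ->]] /=.
  have [D1q1 Rq1] := s1DR q1 q1s; have [D2q2 Rq2] := s2DR q2 q2s.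
  by split; [exact: D12 | exact: overringM].
rewrite big_allpairs_dep mulr_suml; apply: eq_bigr => q1 _.
by rewrite mulr_sumr; apply: eq_bigr => q2 _ /=; rewrite rmorphM; ring.
Qed.

Lemma contraction_ideal D : is_ideal (fun a => in_extension D (f a)).
Proof.
split.
- by exists [::]; rewrite big_nil rmorph0.
- move=> x y [s1 [s1DR s1x]] [s2 [s2DR s2y]]; exists (s1 ++ s2); split.
    by move=> q; rewrite mem_cat => /orP[/s1DR|/s2DR].
  by rewrite big_cat s1x s2y rmorphD.
- by move=> c x /(in_extensionMl (overring_img c)); rewrite -rmorphM.
Qed.

Definition denom_ideal z d := exists c, f c = f d * z.

Lemma denom_ideal_ideal z : is_ideal (denom_ideal z).
Proof.
split.
- by exists 0; rewrite !rmorph0 mul0r.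
- by move=> x y [c1 E1] [c2 E2]; exists (c1 + c2); rewrite !rmorphD E1 E2 mulrDl.
- by move=> a x [c E]; exists (a * c); rewrite !rmorphM E mulrA.
Qed.

Section CommonDenominator.
Hypothesis denom_unit : forall z, R z -> in_extension (denom_ideal z) 1.

Lemma common_denom_unit (s : seq K) : (forall z, z \in s -> R z) ->
  in_extension (fun d => forall z, z \in s -> denom_ideal z d) 1.
Proof.
elim: s => [|z s IHs] Rs; first by rewrite -(rmorph1 f); exact: in_extension_gen.
rewrite -[1]mulr1; apply: in_extensionM (denom_unit (Rs z (mem_head z s))) (IHs _) _.
  by move=> w ws; apply: Rs; rewrite inE ws orbT.
move=> d1 d2 zd1 sd2 w; rewrite inE => /predU1P[->|ws].
  by rewrite mulrC; case: (denom_ideal_ideal z) => _ _; apply.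
by case: (denom_ideal_ideal w) => _ _; apply; exact: sd2.
Qed.

Lemma flat_of_denom_unit : flat_over f R.
Proof.
move=> n a r Rr ar0.
have [s [sDR s1]] : in_extension (fun d => forall z, z \in map r (enum 'I_n) -> denom_ideal z d) 1.
  by apply: common_denom_unit => _ /mapP[i _ ->].
pose d j := (nth (0, 0) s j).1; pose u j := (nth (0, 0) s j).2.
have sDRj (j : 'I_(size s)) := sDR _ (mem_nth (0, 0) (ltn_ord j)).
have /choice[b bE] : forall ij : 'I_n * 'I_(size s), exists c, f c = f (d ij.2) * r ij.1.
  by move=> [i j]; apply: (sDRj j).1; exact/map_f/mem_enum.
exists (size s), (fun i j => b (i, j)), u; split.
- by move=> j; exact: (sDRj j).2.
- move=> i; under eq_bigr do rewrite bE /=.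
  rewrite -{1}[r i]mul1r -s1 (big_nth (0, 0)) big_mkord mulr_suml.
  by apply: eq_bigr => j _; rewrite mulrAC.
- move=> j; apply: f_inj; rewrite rmorph0 rmorph_sum /=.
  under eq_bigr do rewrite rmorphM /= bE /=.
  transitivity (f (d j) * \sum_(i < n) f (a i) * r i); last by rewrite ar0 mulr0.
  by rewrite mulr_sumr; apply: eq_bigr => i _; rewrite mulrCA.
Qed.

End CommonDenominator.

End Overring.

Section Localization.
Variables (A : idomainType) (K : fieldType) (f : {rmorphism A -> K}).
Hypothesis f_inj : injective f.
Variable S : A -> Prop.
Hypothesis Smult : mult_closed_nonzero S.

Lemma mult_closed_img_neq0 s : S s -> f s != 0.
Proof.
by case: Smult => _ _ S0 Ss; rewrite raddf_eq0 //; apply/eqP => s0; rewrite s0 in Ss.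
Qed.

Lemma localization_denom z : localization f S z -> exists2 s, S s & denom_ideal f z s.
Proof.
move=> [a [s [Ss ->]]]; exists s => //; exists a.
by rewrite mulrC divfK // mult_closed_img_neq0.
Qed.

Lemma localization_pow_div (P : A -> Prop) b y m : (exists2 s, S s & P s) -> b != 0 ->
  (forall Q, is_prime_ideal Q -> Q b -> Q <> P -> exists t, ~ Q t /\ colon b (y ^+ m) t) ->
  localization f S (f (y ^+ m) / f b).
Proof.
move=> [s Ss Ps] b0 ycolon.
have [t St [c tE]] : exists2 t, S t & colon b (y ^+ m) t.
  apply: contrapT => nSt; have [S1 SM _] := Smult.
  have [Q [Qprime bQ QS]] :
      exists Q, [/\ is_prime_ideal Q, colon b (y ^+ m) `<=` Q & avoids Q S].
    apply: prime_avoiding => //; first exact: colon_ideal.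
    by move=> x xcolon Sx; apply: nSt; exists x.
  have QP : Q <> P by move=> QP; apply: (QS s) => //; rewrite QP.
  have [t [nQt tcolon]] := ycolon Q Qprime (bQ _ (colon_refl b _)) QP.
  exact/nQt/bQ.
have fb0 : f b != 0 by rewrite raddf_eq0.
exists c, t; split=> //; apply/eqP.
by rewrite eqr_div ?(mult_closed_img_neq0 St) // -!rmorphM mulrC tE mulrC.
Qed.

End Localization.

Section Sublocalization.
Variables (A : idomainType) (K : fieldType) (f : {rmorphism A -> K}).
Hypothesis f_frac : fraction_field_of f.
Variables (R : K -> Prop) (F : (A -> Prop) -> Prop).
Hypothesis Rover : overring f R.
Hypothesis F_mult : forall S, F S -> mult_closed_nonzero S.
Hypothesis R_cap : forall z, R z <-> (forall S, F S -> localization f S z).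
Hypotheses (Adim : krull_dim_one A) (Anoeth : noetherian_spectrum A).

Lemma sublocalization_denom_unit z : R z -> in_extension f R (denom_ideal f z) 1.
Proof.
have [f_inj f_surj] := f_frac.
move=> Rz; apply: contrapT => nunit.
have [P [Pprime JP _]] : exists P, [/\ is_prime_ideal P,
    (fun a => in_extension f R (denom_ideal f z) (f a)) `<=` P & avoids P (eq 1)].
  apply: prime_avoiding => //; first exact: contraction_ideal.
  - by move=> x y <- <-; rewrite mulr1.
  - by move=> x zx x1; apply: nunit; rewrite -(rmorph1 f) x1.
have denomP d : denom_ideal f z d -> P d by move=> /(in_extension_gen Rover)/JP.
have [[S FS SP]|meet] := pselect (exists2 S, F S & avoids S P).
  have [s Ss /denomP] := localization_denom f_inj (F_mult FS) ((R_cap z).1 Rz S FS).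
  exact: SP.
have [a [b [b0 zE]]] := f_surj z.
have fb0 : f b != 0 by rewrite raddf_eq0.
have denom_b : denom_ideal f z b by exists a; rewrite zE mulrC divfK.
have [y [m [nPy ycolon]]] := pow_div_local_V Adim Anoeth b0 Pprime.
have Rw : R (f (y ^+ m) / f b).
  apply/R_cap => S FS; apply: (@localization_pow_div _ _ _ f_inj _ (F_mult FS) P) => //.
    apply: contrapT => nSP; apply: meet; exists S => // x Sx Px.
    by apply: nSP; exists x.
  by move=> Q Qprime Qb; exact: ycolon.
apply: (prime_idealX_not (m := m) Pprime nPy); apply: JP.
by have := in_extensionMl Rover Rw (in_extension_gen Rover denom_b); rewrite divfK.
Qed.

End Sublocalization.

Unset Implicit Arguments.
Theorem theorem2p12 (A : idomainType) (K : fieldType) (f : {rmorphism A -> K}) :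
  fraction_field_of f ->
  krull_dim_one A ->
  noetherian_spectrum A ->
  forall R : K -> Prop, sublocalization f R -> flat_over f R.
Proof.
move=> f_frac Adim Anoeth R [Rover [F [F_mult R_cap]]].
apply: (flat_of_denom_unit f_frac.1 Rover) => z.
exact: (sublocalization_denom_unit f_frac Rover F_mult R_cap Adim Anoeth).
Qed.
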